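(* For every $R>0$ there exists $\eta>0$ such that for every $\delta\in\mathcal{V}_R$ satisfying $\sup\{|\delta(x)|: x\in\mathcal{K}_1\}<\eta$, the point $0$ is the unique equilibrium point of the vector field $F_{\lambda+\delta}$ lying in $\mathcal{K}_1$.
   Context: Let $n\ge1$, $A,B\in\mathrm{End}(\mathbb{R}^n)$, $b\in\mathbb{R}^n$, $A_u=A+uB$. For $\mu:\mathbb{R}^n\to\mathbb{R}$, $F_\mu$ is the vector field $F_\mu(x)=A_{\mu(x)}x+b\mu(x)$ on $\mathbb{R}^n$. Let $\lambda\in C^\infty(\mathbb{R}^n,\mathbb{R})$ with $\lambda(0)=0$ be such that $0$ is an asymptotically stable equilibrium of $F_\lambda$ with open domain of attraction $D(\lambda)$. Let $\mathcal{K}_1$ be a (semi-algebraic) compact subset of $D(\lambda)$. For $R>0$, $\mathcal{V}_R=\{\delta\in C^\infty(\mathbb{R}^n,\mathbb{R}):\delta(x)=0\ \forall x\in B(0,R)\}$. *)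

From HB Require Import structures.
From mathcomp Require Import all_boot all_order all_algebra.
From mathcomp Require Import all_classical all_reals all_analysis.
Set Implicit Arguments. Unset Strict Implicit. Unset Printing Implicit Defensive.
Import Order.TTheory GRing.Theory Num.Theory.
Import numFieldNormedType.Exports.
Local Open Scope classical_set_scope.
Local Open Scope ring_scope.

Section Defs.
Variables (R : realType) (n : nat).
Notation V := 'cV[R]_n.

Definition enorm (x : V) : R := Num.sqrt (\sum_(i < n) x i 0 ^+ 2).

Fixpoint Ck (k : nat) (f : V -> R) : Prop :=
  match k with
  | 0%N => continuous f
  | k'.+1 => continuous f /\
             forall v : V, (forall x, derivable f x v) /\ Ck k' (fun x => 'D_v f x)
  end.
Definition smooth (f : V -> R) : Prop := forall k, Ck k f.

Definition Au (A B : 'M[R]_n) (u : R) : 'M[R]_n := A + u *: B.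
Definition Fmu (A B : 'M[R]_n) (b : V) (mu : V -> R) (x : V) : V :=
  Au A B (mu x) *m x + mu x *: b.

Definition fwd_solution (F : V -> V) (x0 : V) (phi : R -> V) : Prop :=
  phi 0 = x0 /\
  (phi t @[t --> 0^'+] --> x0) /\
  (forall t : R, 0 < t -> is_derive t 1 phi (F (phi t))).

Definition domain_of_attraction (F : V -> V) : set V :=
  [set x0 | exists phi, fwd_solution F x0 phi /\ (phi t @[t --> +oo] --> (0 : V))].

Definition asympt_stable_0 (F : V -> V) : Prop :=
  F 0 = 0 /\
  (forall eps : R, 0 < eps -> exists2 d : R, 0 < d &
     forall x0, enorm x0 < d ->
       exists phi, fwd_solution F x0 phi /\ forall t, 0 <= t -> enorm (phi t) < eps) /\
  (exists2 r : R, 0 < r & [set x | enorm x < r] `<=` domain_of_attraction F).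

Inductive polyfun : (V -> R) -> Prop :=
  | pf_const (c : R) : polyfun (fun _ => c)
  | pf_coord (i : 'I_n) : polyfun (fun x => x i 0)
  | pf_add p q : polyfun p -> polyfun q -> polyfun (fun x => p x + q x)
  | pf_mul p q : polyfun p -> polyfun q -> polyfun (fun x => p x * q x).

Inductive semialgebraic : set V -> Prop :=
  | sa_pos p : polyfun p -> semialgebraic [set x | 0 < p x]
  | sa_union S T : semialgebraic S -> semialgebraic T -> semialgebraic (S `|` T)
  | sa_inter S T : semialgebraic S -> semialgebraic T -> semialgebraic (S `&` T)
  | sa_compl S : semialgebraic S -> semialgebraic (~` S).

Definition VR (Rad : R) : set (V -> R) :=
  [set delta | smooth delta /\ forall x, enorm x < Rad -> delta x = 0].

End Defs.

From HB Require Import structures.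
From mathcomp Require Import all_boot all_order all_algebra.
From mathcomp Require Import all_classical all_reals all_analysis.
From mathcomp Require Import ring lra.
Import Order.TTheory GRing.Theory Num.Theory.
Import numFieldNormedType.Exports.
Local Open Scope classical_set_scope.
Local Open Scope ring_scope.

(* An equilibrium x0 of F_lambda lying in the domain of attraction is 0: as
   lambda is C^1, F_lambda(y) = O(|y - x0|) near x0, so a Gronwall estimate on
   |phi(t) - x0|^2 shows that the trajectory phi issued from x0 stays at x0,
   while it must tend to 0.  Hence |F_lambda| has a positive lower bound c on
   the compact set K1 minus B(0, R), and |B x + b| <= M on K1.  Since
   F_(lambda + delta)(x) = F_lambda(x) + delta(x) (B x + b), an equilibrium of
   F_(lambda + delta) in K1 either lies in B(0, R), where delta vanishes, or
   satisfies c <= |delta(x)| M; so eta = c / M works. *)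

Section matrix_norm.
Context {R : realType}.

Lemma mxentry_le_norm {m k} (x : 'M[R]_(m, k)) i j : `|x i j| <= `|x|.
Proof.
rewrite [leRHS]/Num.Def.normr /= mx_normrE.
exact: (le_bigmax _ (fun ij : 'I_m * 'I_k => `|x ij.1 ij.2|) (i, j)).
Qed.

Lemma mx_norm_le {m k} (x : 'M[R]_(m, k)) M :
  0 <= M -> (forall i j, `|x i j| <= M) -> `|x| <= M.
Proof.
move=> M0 xM; rewrite [leLHS]/Num.Def.normr /= mx_normrE.
by apply: bigmax_le => // ij _; exact: xM.
Qed.

Lemma mulmx_norm_le {m k p} (M : 'M[R]_(m, k)) (N : 'M[R]_(k, p)) :
  `|M *m N| <= k%:R * `|M| * `|N|.
Proof.
apply: mx_norm_le => [|i j]; first by rewrite !mulr_ge0.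
have -> : k%:R * `|M| * `|N| = \sum_(l < k) `|M| * `|N|.
  by rewrite sumr_const card_ord -mulrA mulr_natl.
rewrite mxE (le_trans (ler_norm_sum _ _ _)) //.
by apply: ler_sum => l _; rewrite normrM ler_pM // mxentry_le_norm.
Qed.

Lemma mulmx_continuous {m k p} (M : 'M[R]_(m, k)) :
  continuous (mulmx M : 'M[R]_(k, p) -> 'M[R]_(m, p)).
Proof.
apply/bounded_linear_continuous/bounded_funP => r.
exists (k%:R * `|M| * r) => N Nr /=.
by rewrite (le_trans (mulmx_norm_le M N)) // ler_wpM2l // mulr_ge0.
Qed.

End matrix_norm.

Section euclidean_norm.
Context {R : realType} {n : nat}.
Local Notation V := 'cV[R]_n.

Lemma enorm_sqr (x : V) : enorm x ^+ 2 = \sum_i x i 0 ^+ 2.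
Proof. by rewrite sqr_sqrtr // sumr_ge0 // => i _; exact: sqr_ge0. Qed.

Lemma enorm0 : enorm (0 : V) = 0.
Proof. by rewrite /enorm big1 ?sqrtr0 // => i _; rewrite mxE expr0n. Qed.

Lemma norm_le_enorm (x : V) : `|x| <= enorm x.
Proof.
apply: mx_norm_le => [|i j]; first exact: sqrtr_ge0.
rewrite ord1 -sqrtr_sqr ler_wsqrtr // (bigD1 i) //= lerDl.
by apply: sumr_ge0 => l _; exact: sqr_ge0.
Qed.

Lemma enorm_eq0 (x : V) : enorm x = 0 -> x = 0.
Proof.
by move=> x0; apply/eqP; rewrite -normr_eq0 eq_le normr_ge0 -x0 norm_le_enorm.
Qed.

Lemma continuous_enorm : continuous (@enorm R n).
Proof.
move=> x; apply: continuous_comp; last exact: sqrt_continuous.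
apply: (continuous_big (op := +%R)) => [|i _ y]; first exact: add_continuous.
exact: (continuous_comp (@coord_continuous R n 1 i 0 y) (@exprn_continuous R 2 _)).
Qed.

Lemma sum_mul_le_norm (u w : V) :
  \sum_i u i 0 * w i 0 <= n%:R * `|u| * `|w|.
Proof.
have -> : n%:R * `|u| * `|w| = \sum_(i < n) `|u| * `|w|.
  by rewrite sumr_const card_ord -mulrA mulr_natl.
apply: ler_sum => i _; rewrite (le_trans (ler_norm _)) // normrM.
by apply: ler_pM => //; exact: mxentry_le_norm.
Qed.

End euclidean_norm.

Section compact_extrema.
Context {R : realType} {T : topologicalType}.
Context {S : set T} {g : T -> R}.
Hypotheses (S_compact : compact S) (g_cont : continuous g).

Lemma continuous_compact_ub : exists2 M, 0 < M & forall x, S x -> g x <= M.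
Proof.
have [S0|S0] := pselect (S !=set0); last by exists 1 => // x Sx; case: S0; exists x.
have [xm _ g_xm] := compact_EVT_max S0 S_compact (continuous_subspaceT g_cont).
exists (`|g xm| + 1) => [|x Sx]; first by rewrite ltr_pwDr // normr_ge0.
by rewrite (le_trans (g_xm x _)) ?inE // (le_trans (ler_norm _)) // lerDl.
Qed.

Lemma continuous_compact_le_sup x : S x -> g x <= sup (g @` S).
Proof.
move=> Sx; apply: sup_upper_bound; last by exists x.
have [M _ gM] := continuous_compact_ub.
by split; [exists (g x), x | exists M => _ [y Sy <-]; exact: gM].
Qed.

Lemma continuous_compact_pos_lb : (forall x, S x -> 0 < g x) ->
  exists2 c, 0 < c & forall x, S x -> c <= g x.
Proof.
move=> g_gt0; have [S0|S0] := pselect (S !=set0); last first.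
  by exists 1 => // x Sx; case: S0; exists x.
have [xm xmS g_xm] := compact_EVT_min S0 S_compact (continuous_subspaceT g_cont).
by exists (g xm) => [|x Sx]; [apply: g_gt0; rewrite -inE | apply: g_xm; rewrite inE].
Qed.

End compact_extrema.

Section line_derivative.
Context {R : realType} {V W : normedModType R}.

Lemma is_derive_line (f : V -> W) (p v : V) (s : R) :
  derivable f (p + s *: v) v ->
  is_derive s 1 (fun t => f (p + t *: v)) ('D_v f (p + s *: v)).
Proof.
set q := p + s *: v.
have shiftE :
    (fun h : R => h^-1 *: (((fun t => f (p + t *: v)) \o shift s) (h *: 1) - f q)) =
    (fun h : R => h^-1 *: ((f \o shift q) (h *: v) - f q)).
  by apply: funext => h /=; rewrite scaler1 scalerDl addrCA addrC.
by move=> fv; apply: DeriveDef; rewrite /derivable /derive shiftE.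
Qed.

End line_derivative.

Section real_derivative.
Context {R : realType}.

Lemma is_derive1_continuous (f : R -> R) (x df : R) :
  is_derive x 1 f df -> {for x, continuous f}.
Proof. by move=> [/derivable1_diffP/differentiable_continuous]. Qed.

Lemma is_derive_expR_scale (c u : R) :
  is_derive u 1 (fun v : R => expR (c * v)) (expR (c * u) * c).
Proof.
have lin : is_derive u 1 (fun v : R => c * v) c.
  by have := is_deriveZ c (is_derive_id u (1 : R)); rewrite [c *: 1]mulr1.
exact: (is_derive1_comp (f := expR) (g := fun v => c * v) (is_derive_expR _) lin).
Qed.

Variables (g dg : R -> R) (C : R).
Hypothesis g_dg : forall s : R, is_derive s 1 g (dg s).

Lemma derive_bound_segment (a b : R) : a <= b ->
  (forall s, a <= s <= b -> `|dg s| <= C) -> `|g b - g a| <= C * (b - a).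
Proof.
move=> ab dgC.
have gab : {within `[a, b], continuous g}.
  by apply: derivable_within_continuous => s _; exact: ex_derive.
have [c cab ->] := MVT_segment ab (fun s _ => g_dg s) gab.
rewrite normrM [`|b - a|]ger0_norm ?subr_ge0 // ler_wpM2r ?subr_ge0 //.
by apply: dgC; move: cab; rewrite in_itv.
Qed.

Lemma derive_bound (d : R) :
  (forall s, `|s| <= `|d| -> `|dg s| <= C) -> `|g d - g 0| <= C * `|d|.
Proof.
move=> dgC; have [d0|d0] := leP 0 d.
  rewrite (ger0_norm d0); have := @derive_bound_segment 0 d d0; rewrite subr0.
  apply=> s /andP[s0 sd].
  by apply: dgC; rewrite !ger0_norm // (le_trans s0).
have := @derive_bound_segment d 0 (ltW d0); rewrite sub0r distrC (ltr0_norm d0).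
by apply=> s /andP[ds s0]; apply: dgC; rewrite !ler0_norm ?lerN2 // ltW.
Qed.

End real_derivative.

Section coordinate_path.
Context {R : realType} {n : nat}.
Local Notation V := 'cV[R]_n.

(* Only the partial derivatives of a C^1 function are known to be continuous,
   so increments are telescoped along a path changing one coordinate at a time. *)
Definition coord_path (x y : V) (k : nat) : V :=
  \col_i (if (i < k)%N then y i 0 else x i 0).

Lemma coord_path0 x y : coord_path x y 0 = x.
Proof. by apply/matrixP => i j; rewrite !mxE ord1. Qed.

Lemma coord_path_last x y : coord_path x y n = y.
Proof. by apply/matrixP => i j; rewrite !mxE ltn_ord ord1. Qed.

Lemma coord_pathS x y (k : 'I_n) :
  coord_path x y k.+1 = coord_path x y k + (y k 0 - x k 0) *: delta_mx k 0.
Proof.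
apply/matrixP => i j; rewrite !mxE ord1 eqxx andbT ltnS leq_eqVlt val_eqE.
have [->|ik] := eqVneq i k; first by rewrite ltnn mulr1 subrKC.
by rewrite mulr0 addr0.
Qed.

Lemma coord_path_dist (x y : V) (k : 'I_n) (s : R) : `|s| <= `|y k 0 - x k 0| ->
  `|coord_path x y k + s *: delta_mx k 0 - x| <= `|y - x|.
Proof.
move=> sk; apply: mx_norm_le => // i j; rewrite !mxE ord1 eqxx andbT.
have [->|ik] := eqVneq i k.
  rewrite ltnn mulr1 addrC addKr (le_trans sk) //.
  by have := mxentry_le_norm (y - x) k 0; rewrite !mxE.
rewrite mulr0 addr0; case: ifP => _; last by rewrite subrr normr0.
by have := mxentry_le_norm (y - x) i 0; rewrite !mxE.
Qed.

Lemma Ck1_lipschitz_at (f : V -> R) (x : V) : Ck 1 f ->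
  exists2 rho, 0 < rho & exists2 K, 0 <= K & forall y, `|y - x| < rho ->
    `|f y - f x| <= K * `|y - x|.
Proof.
move=> [_ Df]; pose D k := 'D_(delta_mx k 0) f.
pose C k := `|D k x| + 1.
have : \forall z \near x, forall k, `|D k z| <= C k.
  apply: (@filter_forall V 'I_n (fun k z => `|D k z| <= C k) (nbhs x) _) => k.
  have [_ /(_ x) Dk_cont] := Df (delta_mx k 0).
  apply: filterS (cvgr_dist_lt _ _ Dk_cont _ ltr01) => z Dz.
  have := ler_normD (D k z - D k x) (D k x).
  by rewrite subrK => /le_trans; apply; rewrite addrC lerD2l distrC ltW.
move=> /nbhs_normP [rho rho0 /= DfC]; exists rho => //.
exists (\sum_k C k) => [|y yx]; first by apply: sumr_ge0 => k _; apply: addr_ge0.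
rewrite -[in f y](coord_path_last x y) -[in f x](coord_path0 x y).
rewrite -(telescope_sumr (fun k => f (coord_path x y k))) // big_mkord mulr_suml.
apply: (le_trans (ler_norm_sum _ _ _)); apply: ler_sum => k _.
rewrite coord_pathS; apply: (le_trans (y := C k * `|y k 0 - x k 0|)).
  have := derive_bound (fun t => f (coord_path x y k + t *: delta_mx k 0))
    (fun t => D k (coord_path x y k + t *: delta_mx k 0)) (C k).
  rewrite /= scale0r addr0; apply => [s|s sk].
    by apply: is_derive_line; have [+ _] := Df (delta_mx k 0); apply.
  apply: DfC; rewrite /= distrC; exact: le_lt_trans (coord_path_dist _ _ _ _ sk) yx.
rewrite ler_wpM2l ?addr_ge0 //.
by have := mxentry_le_norm (y - x) k 0; rewrite !mxE.
Qed.

End coordinate_path.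

Section gronwall.
Context {R : realType}.
Variables (h dh : R -> R) (r L : R).
Hypothesis r_gt0 : 0 < r.
Hypothesis h_ge0 : forall t : R, 0 <= h t.
Hypothesis h_dh : forall t : R, 0 < t -> is_derive t 1 h (dh t).
Hypothesis dh_le : forall t : R, 0 < t -> h t < r -> dh t <= L * h t.

(* expR (- L u) * h u is nonincreasing as long as h < r. *)
Lemma gronwall_right_zero (s : R) : 0 <= s -> h s = 0 -> h u @[u --> s^'+] --> 0 ->
  exists2 e, 0 < e & forall u, s <= u <= s + e -> h u = 0.
Proof.
move=> s0 hs0 hs.
have /nbhs_normP [e e0 /= h_lt_r] : \forall u \near s, s < u -> `|0 - h u| < r.
  exact: (cvgr_dist_lt _ _ hs _ r_gt0).
exists (e / 2) => [|u /andP[+ ue]]; first by rewrite divr_gt0.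
rewrite le_eqVlt => /predU1P[<- //|su].
have u_gt0 : 0 < u := le_lt_trans s0 su.
pose E (v : R) := expR (- L * v).
pose g (v : R) := E v * h v.
have g_dg (v : R) : 0 < v -> is_derive v 1 g (E v * (dh v - L * h v)).
  move=> v0; have -> : g = E * h by [].
  apply: is_derive_eq (is_deriveM (is_derive_expR_scale (- L) v) (h_dh v v0)) _.
  by rewrite /GRing.scale /= /E; ring.
have g_le0 (v : R) : v \in `]s, u[ -> derive1 g v <= 0.
  rewrite in_itv /= => /andP[sv vu]; have v0 := le_lt_trans s0 sv.
  have gv := g_dg v v0; rewrite derive1E derive_val pmulr_rle0 ?expR_gt0 // subr_le0.
  apply: dh_le => //; have := h_lt_r v; rewrite /= sub0r normrN.
  rewrite [`|s - v|]ltr0_norm ?subr_lt0 // [`|h v|]ger0_norm // opprB ltrBlDl.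
  apply => //; have e_gt0 : 0 < e := e0; lra.
have g_cont : {within `[s, u], continuous g}.
  apply/(continuous_within_itvP _ su); split.
  - move=> v; rewrite in_itv /= => /andP[sv _].
    exact: is_derive1_continuous (g_dg v (le_lt_trans s0 sv)).
  - have -> : g s = E s * 0 by rewrite /g hs0.
    apply: cvgM hs.
    apply: cvg_at_right_filter.
    exact: is_derive1_continuous (is_derive_expR_scale (- L) s).
  - apply: cvg_at_left_filter; exact: is_derive1_continuous (g_dg u u_gt0).
have g_der (v : R) : v \in `]s, u[ -> derivable g v 1.
  by rewrite in_itv /= => /andP[sv _]; case: (g_dg v (le_lt_trans s0 sv)).
have : g u <= g s.
  by apply: (ler0_derive1_le_cc g_der g_le0 g_cont); rewrite ?in_itv /= ?lexx ?ltW.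
rewrite /g hs0 mulr0 pmulr_rle0 ?expR_gt0 // => hu_le0.
by apply/eqP; rewrite eq_le hu_le0 h_ge0.
Qed.

(* Otherwise the last zero of h in [0, t] would be followed by further zeros. *)
Lemma gronwall_zero : h 0 = 0 -> h u @[u --> 0^'+] --> 0 ->
  forall t, 0 <= t -> h t = 0.
Proof.
move=> h00 h0 t t0; apply: contrapT => ht.
pose Z := [set s | 0 <= s <= t /\ h s = 0].
have Z0 : Z 0 by split; rewrite ?lexx.
have Zub : has_ubound Z by exists t => s [/andP[_]].
have supZ_ge0 : 0 <= sup Z := sup_upper_bound (conj (ex_intro _ 0 Z0) Zub) Z0.
have supZ_le : sup Z <= t by apply: ge_sup; [exists 0 | move=> s [/andP[_]]].
have h_cont s : 0 < s -> {for s, continuous h}.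
  by move=> s0; exact: is_derive1_continuous (h_dh s s0).
have hsupZ : h (sup Z) = 0.
  move: supZ_ge0; rewrite le_eqVlt => /predU1P[<- //|supZ_gt0].
  apply/eqP; rewrite eq_le h_ge0 andbT leNgt; apply/negP => hpos.
  have [v [[_ hv0] hv]] := closure_sup (ex_intro _ 0 Z0) Zub
    (cvgr_dist_lt _ _ (h_cont _ supZ_gt0) _ hpos).
  by move: hv; rewrite /= hv0 subr0 gtr0_norm // ltxx.
have supZ_lt : sup Z < t.
  by rewrite lt_neqAle supZ_le andbT; apply: contra_notN ht => /eqP <-.
have h_right : h u @[u --> (sup Z)^'+] --> 0.
  move: supZ_ge0; rewrite le_eqVlt => /predU1P[<- //|supZ_gt0].
  by rewrite -hsupZ; apply: cvg_at_right_filter; exact: h_cont.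
have [e e0 he] := gronwall_right_zero _ supZ_ge0 hsupZ h_right.
have : Num.min t (sup Z + e) <= sup Z.
  apply: sup_upper_bound; first by split; [exists 0 | exact: Zub].
  split; first by rewrite ge_min lexx (le_trans supZ_ge0) // le_min ltW ?lerDl ?ltW.
  by apply: he; rewrite le_min ltW //= lerDl ltW //= ge_min lexx orbT.
by rewrite leNgt lt_min supZ_lt ltrDl e0.
Qed.

End gronwall.

Section trajectories.
Context {R : realType} {n : nat}.
Local Notation V := 'cV[R]_n.

Lemma is_derive_coord {m k} (phi : R -> 'M[R]_(m, k)) (dphi : 'M[R]_(m, k))
    (t : R) i j :
  is_derive t 1 phi dphi -> is_derive t 1 (fun s => phi s i j) (dphi i j).
Proof.
move=> [phi_t <-]; apply: DeriveDef; first by move/derivable_mxP: phi_t; apply.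
by rewrite derive_mx // mxE.
Qed.

Lemma is_derive_enorm_sqrB (phi : R -> V) (x0 dphi : V) (t : R) :
  is_derive t 1 phi dphi ->
  is_derive t 1 (fun s => enorm (phi s - x0) ^+ 2)
    (2 * \sum_i (phi t - x0) i 0 * dphi i 0).
Proof.
move=> phi_t.
have coord_sqr i : is_derive t 1 (fun s => (phi s - x0) i 0 ^+ 2)
    (2 * ((phi t - x0) i 0 * dphi i 0)).
  have := is_derive_coord _ _ _ i 0 (is_deriveB phi_t (is_derive_cst x0 t 1)).
  rewrite subr0 => /(is_deriveX 2) coord_t; apply: is_derive_eq coord_t _.
  by rewrite /GRing.scale /=; ring.
under eq_fun do rewrite enorm_sqr.
by have := is_derive_sum coord_sqr; rewrite fct_sumE -mulr_sumr.
Qed.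

Lemma fwd_solution_from_equilibrium (F : V -> V) (x0 : V) (phi : R -> V) (rho L : R) :
  0 < rho -> 0 <= L -> (forall y, `|y - x0| < rho -> `|F y| <= L * `|y - x0|) ->
  fwd_solution F x0 phi -> forall t, 0 <= t -> phi t = x0.
Proof.
move=> rho0 L0 FL [phi0 [phi0_right phi']].
pose h t := enorm (phi t - x0) ^+ 2.
have h_dh (t : R) : 0 < t ->
    is_derive t 1 h (2 * \sum_i (phi t - x0) i 0 * F (phi t) i 0).
  by move=> t0; exact: is_derive_enorm_sqrB (phi' t t0).
have dh_le (t : R) : 0 < t -> h t < rho ^+ 2 ->
    2 * \sum_i (phi t - x0) i 0 * F (phi t) i 0 <= 2 * (n%:R * L) * h t.
  move=> _ ht; rewrite -mulrA ler_pM2l // (le_trans (sum_mul_le_norm _ _)) // -!mulrA.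
  have u_le := norm_le_enorm (phi t - x0).
  have u_lt : `|phi t - x0| < rho.
    by rewrite (le_lt_trans u_le) // -ltr_sqr ?nnegrE ?sqrtr_ge0 ?ltW.
  rewrite ler_wpM2l // (le_trans (ler_wpM2l (normr_ge0 _) (FL _ u_lt))) //.
  by rewrite mulrCA ler_wpM2l // /h expr2 ler_pM.
have h0 : h 0 = 0 by rewrite /h phi0 subrr enorm0 expr0n.
have h_right : h t @[t --> 0^'+] --> 0.
  have h_cont : {for x0, continuous (fun v : V => enorm (v - x0) ^+ 2)}.
    have subx0 : {for x0, continuous (fun v : V => v - x0)}.
      by apply: continuousB; [exact: cvg_id | exact: cst_continuous].
    exact: continuous_comp (continuous_comp subx0 (continuous_enorm _))
                           (@exprn_continuous R 2 _).
  rewrite -[X in _ --> X](_ : enorm (x0 - x0) ^+ 2 = 0); last first.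
    by rewrite subrr enorm0 expr2 mulr0.
  exact: (continuous_cvg _ h_cont phi0_right).
move=> t t0; apply/eqP; rewrite -subr_eq0; apply/eqP/enorm_eq0/eqP.
rewrite -sqrf_eq0; apply/eqP.
exact: (gronwall_zero _ _ _ _ (exprn_gt0 2 rho0) (fun t => sqr_ge0 _) h_dh dh_le
  h0 h_right t t0).
Qed.

End trajectories.

Section feedback_field.
Context {R : realType} {n : nat} {A B : 'M[R]_n} {b : 'cV[R]_n}.
Local Notation V := 'cV[R]_n.
Local Notation F := (Fmu A B b).

Lemma FmuE (mu : V -> R) x : F mu x = A *m x + mu x *: (B *m x + b).
Proof. by rewrite /Fmu /Au mulmxDl -scalemxAl scalerDr addrA. Qed.

Lemma Fmu_addE (mu delta : V -> R) x :
  F (fun y => mu y + delta y) x = F mu x + delta x *: (B *m x + b).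
Proof. by rewrite !FmuE scalerDl addrA. Qed.

Lemma continuous_Fmu (mu : V -> R) : continuous mu -> continuous (F mu).
Proof.
move=> mu_cont x; rewrite (_ : F mu = fun y => A *m y + mu y *: (B *m y + b)).
  apply: continuousD; first exact: mulmx_continuous.
  apply: continuousZ; first exact: mu_cont.
  by apply: continuousD; [exact: mulmx_continuous | exact: cst_continuous].
by apply: funext => y; rewrite FmuE.
Qed.

Lemma Fmu_lipschitz_at_equilibrium (mu : V -> R) x0 : Ck 1 mu -> F mu x0 = 0 ->
  exists2 rho, 0 < rho & exists2 L, 0 <= L & forall y, `|y - x0| < rho ->
    `|F mu y| <= L * `|y - x0|.
Proof.
move=> mu1 Fx0; have [rho rho0 [K K0 muK]] := Ck1_lipschitz_at mu x0 mu1.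
pose w := B *m x0 + b.
exists rho => //.
exists (n%:R * `|A| + (`|mu x0| + K * rho) * (n%:R * `|B|) + K * `|w|).
  by have rho_ge0 := ltW rho0; rewrite ?(addr_ge0, mulr_ge0).
move=> y yx0.
have -> : F mu y = A *m (y - x0) + mu y *: (B *m (y - x0)) + (mu y - mu x0) *: w.
  rewrite -[LHS]subr0 -[in LHS]Fx0 !FmuE /w !mulmxBr.
  by apply/matrixP => i j; rewrite !mxE; ring.
have mu_y : `|mu y| <= `|mu x0| + K * rho.
  rewrite -[mu y](subrK (mu x0)) (le_trans (ler_normD _ _)) // addrC lerD2l.
  by rewrite (le_trans (muK y yx0)) // ler_wpM2l // ltW.
rewrite mulrDl [X in _ <= X + _]mulrDl (le_trans (ler_normD _ _)) // lerD //.
  rewrite (le_trans (ler_normD _ _)) // lerD //; first exact: mulmx_norm_le.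
  by rewrite normrZ -mulrA; apply: ler_pM => //; exact: mulmx_norm_le.
by rewrite normrZ mulrAC ler_wpM2r // muK.
Qed.

Lemma Fmu_add_eq0 (mu delta : V -> R) x :
  F (fun y => mu y + delta y) x = 0 -> `|F mu x| = `|delta x| * `|B *m x + b|.
Proof.
by rewrite Fmu_addE => /eqP; rewrite addr_eq0 => /eqP ->; rewrite normrN normrZ.
Qed.

Lemma Fmu_bounded_below_off_ball (mu : V -> R) (K : set V) (r : R) :
  continuous mu -> compact K -> (forall x, K x -> F mu x = 0 -> x = 0) -> 0 < r ->
  exists2 c, 0 < c & forall x, K x -> r <= enorm x -> c <= `|F mu x|.
Proof.
move=> mu_cont K_compact K_eq0 r_gt0.
have off_ball_compact : compact (K `&` [set x | r <= enorm x]).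
  apply: compact_closedI K_compact _.
  apply: (@preimage_closed _ _ (@enorm R n) [set y | r <= y]); last exact: closed_ge.
  by move=> x _; exact: continuous_enorm.
have F_cont : continuous (fun x => `|F mu x|).
  move=> x; apply: (continuous_comp (continuous_Fmu _ mu_cont x)).
  exact: norm_continuous.
have [|c c_gt0 cF] := continuous_compact_pos_lb off_ball_compact F_cont.
  move=> x [Kx rx]; rewrite normr_gt0; apply/eqP => /(K_eq0 _ Kx) x0.
  by move: rx; rewrite /= x0 enorm0 leNgt r_gt0.
by exists c => // x Kx rx; exact: cF.
Qed.

Lemma equilibrium_in_attraction_domain (mu : V -> R) (x0 : V) :
  Ck 1 mu -> F mu x0 = 0 -> domain_of_attraction (F mu) x0 -> x0 = 0.
Proof.
move=> mu1 Fx0 [phi [phi_sol phi_oo]].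
have [rho rho0 [L L0 FL]] := Fmu_lipschitz_at_equilibrium _ _ mu1 Fx0.
have phi_x0 := fwd_solution_from_equilibrium _ _ _ _ _ rho0 L0 FL phi_sol.
have phi_oo_x0 : phi t @[t --> +oo] --> x0.
  apply: cvg_trans (near_eq_cvg _) (cvg_cst x0).
  by near=> t; rewrite phi_x0 //; near: t; exact: nbhs_pinfty_ge.
exact: cvg_unique _ phi_oo_x0 phi_oo.
Unshelve. all: by end_near.
Qed.

End feedback_field.

Theorem lemma4 (R : realType) (n : nat) (hn : (0 < n)%N)
  (A B : 'M[R]_n) (b : 'cV[R]_n) (lambda : 'cV[R]_n -> R)
  (K1 : set 'cV[R]_n) :
  smooth lambda -> lambda 0 = 0 ->
  asympt_stable_0 (Fmu A B b lambda) ->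
  semialgebraic K1 -> compact K1 ->
  K1 `<=` domain_of_attraction (Fmu A B b lambda) ->
  forall Rad : R, 0 < Rad ->
  exists2 eta : R, 0 < eta &
    forall delta : 'cV[R]_n -> R, VR Rad delta ->
      sup [set `|delta x| | x in K1] < eta ->
      Fmu A B b (fun x => lambda x + delta x) 0 = 0 /\
      (forall x, K1 x -> Fmu A B b (fun y => lambda y + delta y) x = 0 -> x = 0).
Proof.
move=> lambda_smooth lambda0 _ _ K1_compact K1_attr Rad Rad_gt0.
have K1_eq0 x : K1 x -> Fmu A B b lambda x = 0 -> x = 0.
  move=> K1x Fx.
  exact: equilibrium_in_attraction_domain _ _ (lambda_smooth 1%N) Fx (K1_attr x K1x).
have [c c_gt0 cF] :=
  Fmu_bounded_below_off_ball _ _ _ (lambda_smooth 0%N) K1_compact K1_eq0 Rad_gt0.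
have W_cont : continuous (fun x => `|B *m x + b|).
  move=> x; apply: continuous_comp; last exact: norm_continuous.
  exact: continuousD (mulmx_continuous B x) (@cst_continuous _ _ b x).
have [M M_gt0 MW] := continuous_compact_ub K1_compact W_cont.
exists (c / M) => [|delta [delta_smooth delta_ball] delta_sup].
  by rewrite divr_gt0.
have delta_cont y : {for y, continuous (fun x => `|delta x|)}.
  by apply: (continuous_comp (delta_smooth 0%N y)); exact: norm_continuous.
split=> [|x K1x Fx].
  by rewrite FmuE lambda0 delta_ball ?enorm0 // addr0 mulmx0 scale0r addr0.
have [x_in|x_off] := ltP (enorm x) Rad.
  by apply: K1_eq0 => //; move: Fx; rewrite Fmu_addE delta_ball // scale0r addr0.
have := cF x K1x x_off; rewrite (Fmu_add_eq0 _ _ _ Fx) leNgt => /negP[].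
apply: (le_lt_trans (y := sup [set `|delta x| | x in K1] * M)).
  apply: ler_pM => //; last exact: MW.
  exact: (continuous_compact_le_sup K1_compact delta_cont _ K1x).
by rewrite -ltr_pdivlMr.
Qed.
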